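(* Let $f:\mathbb{R}^d\to\mathbb{R}$ be $\mu$-strongly convex and $L$-smooth, with condition number $\kappa=L/\mu$, and let its unique minimizer $x^\star$ satisfy $\|x^\star\|\le r$. Consider SGD iterates $x^{(k+1)}=x^{(k)}-\eta\,\nabla f(x^{(k)};\xi^{(k)})$ with learning rate $\eta\in(0,1/L]$, where the stochastic gradient satisfies $\mathbb{E}[\nabla f(x^{(k)};\xi^{(k)})\mid x^{(k)}]=\nabla f(x^{(k)})$ and $\mathbb{E}\big[\|\nabla f(x^{(k)};\xi^{(k)})-\nabla f(x^{(k)})\|^2\mid x^{(k)}\big]\le\sigma^2$. Define $$R=r+\sqrt{\max(3,\kappa)}\,\sqrt{2r^2+\frac{\sigma^2}{L^2}}.$$ Then for every $k$, if $\|x^{(k)}\|\le R$, then $\mathbb{E}\big[\|x^{(k+1)}\|^2\,\big|\,x^{(k)}\big]\le R^2$; i.e. SGD is stable with respect to the second moment with radius $R$.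
   Context: $\|\cdot\|$ denotes the Euclidean norm. Stability with respect to the second moment: there exist a finite constant $R$ and an index $k_0$ such that for all $k\ge k_0$, whenever $\|x^{(k)}\|^2\le R^2$, one has $\mathbb{E}[\|x^{(k+1)}\|^2\mid x^{(k)}]\le R^2$. *)

From HB Require Import structures.
From mathcomp Require Import all_boot all_order all_algebra.
From mathcomp Require Import all_classical all_reals all_analysis.
Set Implicit Arguments. Unset Strict Implicit. Unset Printing Implicit Defensive.
Import Order.TTheory GRing.Theory Num.Theory.
Import numFieldNormedType.Exports.
Local Open Scope ring_scope.

Definition dotp (R : realType) (d : nat) (u v : 'rV[R]_d) : R :=
  \sum_(i < d) u 0 i * v 0 i.

(* Euclidean norm (the library norm on 'rV is the sup norm, so we define it). *)
Definition enorm (R : realType) (d : nat) (v : 'rV[R]_d) : R :=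
  Num.sqrt (dotp v v).

Definition is_gradient (R : realType) (d : nat) (f : 'rV[R]_d -> R)
  (gradf : 'rV[R]_d -> 'rV[R]_d) : Prop :=
  forall x, differentiable f x /\ forall v, 'd f x v = dotp (gradf x) v.

Definition strongly_convex (R : realType) (d : nat) (mu : R) (f : 'rV[R]_d -> R) : Prop :=
  0 < mu /\
  forall (x y : 'rV[R]_d) (t : R), 0 <= t <= 1 ->
    f (t *: x + (1 - t) *: y) <=
      t * f x + (1 - t) * f y - mu / 2 * t * (1 - t) * enorm (x - y) ^+ 2.

Definition smooth (R : realType) (d : nat) (L : R) (gradf : 'rV[R]_d -> 'rV[R]_d) : Prop :=
  0 < L /\ forall x y, enorm (gradf x - gradf y) <= L * enorm (x - y).

Definition is_minimizer (R : realType) (d : nat) (f : 'rV[R]_d -> R) (xs : 'rV[R]_d) : Prop :=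
  forall y, f xs <= f y.

From HB Require Import structures.
From mathcomp Require Import all_boot all_order all_algebra.
From mathcomp Require Import all_classical all_reals all_analysis.
From mathcomp Require Import ring lra measurable_realfun.
Import Order.TTheory GRing.Theory Num.Theory.
Import numFieldNormedType.Exports.
Local Open Scope ring_scope.
Local Open Scope classical_set_scope.

(* Write [g] for the gradient at [x], [xs] for the minimiser and [s] for
   [sigma ^+ 2].  The stochastic gradient is unbiased, so the second moment of
   the step splits as E||x - eta G||^2 = ||x - eta g||^2 + eta^2 E||G - g||^2,
   and it suffices to show ||x - eta g||^2 + eta^2 s <= R^2 deterministically.
   If 2 <g, x - xs> - eta ||g||^2 >= 2 r ||g|| + eta s, the step does not
   increase ||x||^2 (use <g, xs> >= - r ||g||).  Otherwise, co-coercivity of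
   the gradient of a strongly convex smooth function,
   mu L ||x - xs||^2 + ||g||^2 <= (L + mu) <g, x - xs>, turns
   ||x - xs - eta g||^2 + eta^2 s into a concave quadratic in ||g|| whose
   maximum is at most max(3, kappa) (2 r^2 + s / L^2) = (R - r)^2; the triangle
   inequality through [xs] concludes. *)

Section EuclideanNorm.
Context {R : realType} {d : nat}.
Implicit Types (a : R) (u v w : 'rV[R]_d).

Lemma dotpC u v : dotp u v = dotp v u.
Proof. by apply: eq_bigr => i _; rewrite mulrC. Qed.

Lemma dotpDl u v w : dotp (u + v) w = dotp u w + dotp v w.
Proof. by rewrite /dotp -big_split; apply: eq_bigr => i _; rewrite mxE mulrDl. Qed.

Lemma dotpZl a u v : dotp (a *: u) v = a * dotp u v.
Proof. by rewrite /dotp mulr_sumr; apply: eq_bigr => i _; rewrite mxE mulrA. Qed.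

Lemma dotpNl u v : dotp (- u) v = - dotp u v.
Proof. by rewrite -scaleN1r dotpZl mulN1r. Qed.

Lemma dotpBl u v w : dotp (u - v) w = dotp u w - dotp v w.
Proof. by rewrite dotpDl dotpNl. Qed.

Lemma dotpDr u v w : dotp u (v + w) = dotp u v + dotp u w.
Proof. by rewrite dotpC dotpDl !(dotpC u). Qed.

Lemma dotpZr a u v : dotp u (a *: v) = a * dotp u v.
Proof. by rewrite dotpC dotpZl dotpC. Qed.

Lemma dotpNr u v : dotp u (- v) = - dotp u v.
Proof. by rewrite dotpC dotpNl dotpC. Qed.

Lemma dotpBr u v w : dotp u (v - w) = dotp u v - dotp u w.
Proof. by rewrite dotpDr dotpNr. Qed.

Lemma dotp0l v : dotp 0 v = 0.
Proof. by rewrite /dotp big1 // => i _; rewrite mxE mul0r. Qed.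

Lemma dotp_ge0 v : 0 <= dotp v v.
Proof. by apply: sumr_ge0 => i _; rewrite -expr2 sqr_ge0. Qed.

Lemma dotp_eq0 v : (dotp v v == 0) = (v == 0).
Proof.
apply/idP/eqP => [/eqP v0|->]; last by rewrite dotp0l.
apply/rowP => i; rewrite mxE.
have sq_ge0 j : 0 <= v 0 j * v 0 j by rewrite -expr2 sqr_ge0.
have /eqP := (psumr_eq0P (fun j _ => sq_ge0 j) v0) i isT.
by rewrite mulf_eq0 orbb => /eqP.
Qed.

Lemma enorm_ge0 v : 0 <= enorm v.
Proof. exact: sqrtr_ge0. Qed.

Lemma enorm0 : enorm (0 : 'rV[R]_d) = 0.
Proof. by rewrite /enorm dotp0l sqrtr0. Qed.

Lemma enorm_sq v : enorm v ^+ 2 = dotp v v.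
Proof. by rewrite sqr_sqrtr // dotp_ge0. Qed.

Lemma enorm_eq0 v : (enorm v == 0) = (v == 0).
Proof. by rewrite sqrtr_eq0 le_eqVlt ltNge dotp_ge0 orbF dotp_eq0. Qed.

Lemma enormN v : enorm (- v) = enorm v.
Proof. by rewrite /enorm dotpNl dotpNr opprK. Qed.

Lemma enormZ a v : 0 <= a -> enorm (a *: v) = a * enorm v.
Proof.
move=> a0; rewrite /enorm dotpZl dotpZr mulrA sqrtrM ?mulr_ge0 //.
by rewrite -expr2 sqrtr_sqr ger0_norm.
Qed.

Lemma enorm_sqD u v :
  enorm (u + v) ^+ 2 = enorm u ^+ 2 + 2 * dotp u v + enorm v ^+ 2.
Proof. by rewrite !enorm_sq dotpDl !dotpDr (dotpC v u); ring. Qed.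

Lemma enorm_sqB u v :
  enorm (u - v) ^+ 2 = enorm u ^+ 2 - 2 * dotp u v + enorm v ^+ 2.
Proof. by rewrite enorm_sqD dotpNr enormN; ring. Qed.

Lemma enorm_sqZ a v : enorm (a *: v) ^+ 2 = a ^+ 2 * enorm v ^+ 2.
Proof. by rewrite !enorm_sq dotpZl dotpZr mulrA -expr2. Qed.

Lemma enorm_sqBZ a u v :
  enorm (u - a *: v) ^+ 2 = enorm u ^+ 2 - 2 * a * dotp u v + a ^+ 2 * enorm v ^+ 2.
Proof. by rewrite enorm_sqB dotpZr enorm_sqZ mulrA. Qed.

Lemma dotp_le_enorm u v : dotp u v <= enorm u * enorm v.
Proof.
set a := enorm u; set b := enorm v.
have [->|u0] := eqVneq u 0; first by rewrite dotp0l mulr_ge0 ?enorm_ge0.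
have [->|v0] := eqVneq v 0; first by rewrite dotpC dotp0l mulr_ge0 ?enorm_ge0.
have a0 : 0 < a by rewrite lt_def enorm_eq0 u0 enorm_ge0.
have b0 : 0 < b by rewrite lt_def enorm_eq0 v0 enorm_ge0.
have := sqr_ge0 (enorm (b *: u - a *: v)).
rewrite enorm_sqBZ dotpZl enorm_sqZ -/a -/b => h.
have ab0 : 0 < a * b by rewrite mulr_gt0.
nra.
Qed.

Lemma enorm_triangle u v : enorm (u + v) <= enorm u + enorm v.
Proof.
rewrite -(ler_pXn2r (_ : 0 < 2)%N) ?nnegrE ?addr_ge0 ?enorm_ge0 //.
rewrite enorm_sqD sqrrD; have := dotp_le_enorm u v; lra.
Qed.

End EuclideanNorm.

Lemma derive1_le_of_secant_le {R : realType} (psi : R -> R) (K C : R) :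
  derivable psi 0 1 -> 0 <= C ->
  (forall h, 0 < h <= 1 -> psi h - psi 0 <= h * K + h ^+ 2 * C) ->
  'D_1 psi 0 <= K.
Proof.
move=> dpsi C0 secant; apply/ler_addgt0Pr => e e0.
have quotient_le h : 0 < h <= 1 ->
    h^-1 *: ((psi \o shift 0) (h *: 1) - psi 0) <= K + h * C.
  case/andP=> h0 h1; rewrite /= addr0 [h%:A]mulr1 /GRing.scale /=.
  rewrite -(ler_pM2l h0) mulrA mulfV ?gt_eqF // mul1r mulrDr mulrA -expr2.
  by apply: secant; rewrite h0.
rewrite ['D_1 psi 0]cvg_at_rightE //; apply: limr_le.
  rewrite -(cvg_at_rightE (fun h : R => h^-1 *: ((psi \o shift 0) _ - psi 0))) //.
  apply: cvg_trans dpsi; apply: cvg_app.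
  by move=> A [r r0 Ar]; exists r => // z zr z0; apply: Ar => //; exact/lt0r_neq0.
set del := Num.min 1 (e / (C + 1)).
have del0 : 0 < del by rewrite lt_min ltr01 divr_gt0 // ltr_wpDl.
near=> h.
have h0 : 0 < h by near: h; exists 1 => //=.
have hdel : h <= del.
  near: h; exists del => //= z; rewrite /ball_ /= sub0r normrN.
  by move=> /ltr_normlP [_ /ltW].
have h1 : h <= 1 by apply: le_trans hdel _; rewrite ge_min lexx.
apply: le_trans (quotient_le h _) _; first by rewrite h0 h1.
rewrite lerD2l.
have : h * (C + 1) <= e.
  rewrite -ler_pdivlMr ?ltr_wpDl //; apply: le_trans hdel _.
  by rewrite ge_min lexx orbT.
nra.
Unshelve. all: by end_near.
Qed.

Lemma cocoercive_of_convex_descent {R : realType} {d : nat}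
    (h : 'rV[R]_d -> R) (gh : 'rV[R]_d -> 'rV[R]_d) (M : R) :
  (forall x y, h x + dotp (gh x) (y - x) <= h y) ->
  (forall x y, h y <= h x + dotp (gh x) (y - x) + M / 2 * enorm (y - x) ^+ 2) ->
  forall x y, enorm (gh x - gh y) ^+ 2 <= M * dotp (gh x - gh y) (x - y).
Proof.
move=> convex descent x y; set w := gh x - gh y; set W := enorm w ^+ 2.
set s := dotp w (x - y).
(* Evaluate both inequalities at [x - t w] and at [y + t w] and add up. *)
have family t : 0 < t -> (2 * t - M * t ^+ 2) * W <= s.
  move=> t0; have := convex x (y + t *: w); have := descent y (y + t *: w).
  have := convex y (x - t *: w); have := descent x (x - t *: w).
  have -> : y + t *: w - x = - (x - y) + t *: w by rewrite opprB addrAC.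
  have -> : x - t *: w - y = (x - y) - t *: w by rewrite addrAC.
  rewrite [y + _ - y]addrAC [x - _ - x]addrAC !subrr !add0r enormN !enorm_sqZ.
  rewrite /W /s /w !enorm_sq !(dotpDr, dotpBr, dotpNr, dotpZr, dotpBl) !(dotpC (gh y) (gh x)).
  nra.
have W0 : 0 <= W by rewrite sqr_ge0.
have [M0|M0] := ltP 0 M.
  have := family M^-1; rewrite invr_gt0 => /(_ M0).
  have -> : 2 * M^-1 - M * M^-1 ^+ 2 = M^-1 by field; rewrite gt_eqF.
  by move=> /(ler_wpM2l (ltW M0)); rewrite mulrA mulfV ?gt_eqF // mul1r.
suff W_eq0 : W = 0.
  by move: (W_eq0) => /eqP; rewrite sqrf_eq0 enorm_eq0 /s => /eqP ->; rewrite W_eq0 dotp0l mulr0.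
apply/eqP; rewrite eq_le W0 andbT leNgt; apply/negP => W_gt0.
set t := (`|s| + 1) / W.
have t0 : 0 < t by rewrite divr_gt0 // ltr_wpDl.
have tW : t * W = `|s| + 1 by rewrite divfK ?gt_eqF.
have := family t t0.
have -> : (2 * t - M * t ^+ 2) * W = 2 * (t * W) + (- M * t) * (t * W) by ring.
have Mt : 0 <= - M * t by rewrite mulr_ge0 ?oppr_ge0 // ltW.
rewrite tW; have := ler_norm s; have := normr_ge0 s; nra.
Qed.

Section Gradient.
Context {R : realType} {d : nat} {f : 'rV[R]_d -> R} {gradf : 'rV[R]_d -> 'rV[R]_d}.
Hypothesis hgrad : is_gradient f gradf.
Implicit Types x y v : 'rV[R]_d.

Lemma is_derive_along x v (t : R) :
  is_derive t (1 : R) (fun s : R => f (x + s *: v)) (dotp (gradf (x + t *: v)) v).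
Proof.
set a := x + t *: v.
have quotientE : (fun h : R => h^-1 *: (((fun s : R => f (x + s *: v)) \o shift t) (h *: 1)
     - f (x + t *: v))) = (fun h : R => h^-1 *: ((f \o shift a) (h *: v) - f a)).
  apply/funext => h /=; congr (_ *: (f _ - _)).
  by rewrite /a scalerDl [h%:A]mulr1 addrCA addrA.
have [dfa dfaE] := hgrad a.
apply: DeriveDef; first by rewrite /derivable quotientE; exact: diff_derivable.
by rewrite /derive quotientE -/(derive f a v) deriveE // dfaE.
Qed.

Lemma gradient_eq0_at_minimizer xs : is_minimizer f xs -> gradf xs = 0.
Proof.
move=> xs_min; set v := gradf xs.
pose psi t := f (xs + t *: v).
have psi'0 : is_derive 0 (1 : R) psi 0.
  apply: (@derive1_at_min _ psi (-1) 1 0) => //.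
  - by move=> t _; case: (is_derive_along xs v t).
  - by rewrite in_itv /= ltrN10 ltr01.
  - by move=> t _; rewrite /psi scale0r addr0.
have := @derive_val _ _ _ _ _ _ _ (is_derive_along xs v 0).
rewrite (@derive_val _ _ _ _ _ _ _ psi'0) scale0r addr0 -/v => /esym/eqP.
by rewrite dotp_eq0 => /eqP.
Qed.

Lemma strongly_convex_first_order mu x y : strongly_convex mu f ->
  f x + dotp (gradf x) (y - x) + mu / 2 * enorm (y - x) ^+ 2 <= f y.
Proof.
case=> mu0 convex_ineq; set v := y - x.
pose psi t := f (x + t *: v).
have := @derive_val _ _ _ _ _ _ _ (is_derive_along x v 0); rewrite scale0r addr0 => <-.
suff : 'D_1 psi 0 <= f y - f x - mu / 2 * enorm v ^+ 2 by lra.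
apply: (derive1_le_of_secant_le _ _ (mu / 2 * enorm v ^+ 2)).
- by case: (is_derive_along x v 0).
- by rewrite mulr_ge0 ?divr_ge0 ?sqr_ge0 ?ltW.
move=> h /andP[h0 h1]; rewrite /psi scale0r addr0.
have := convex_ineq y x h; rewrite h1 ltW //= => /(_ isT).
have -> : h *: y + (1 - h) *: x = x + h *: v.
  by rewrite /v scalerBr scalerBl scale1r addrCA.
rewrite -/v; nra.
Qed.

Lemma strongly_convex_monotone mu x y : strongly_convex mu f ->
  mu * enorm (x - y) ^+ 2 <= dotp (gradf x - gradf y) (x - y).
Proof.
move=> fsc; have := strongly_convex_first_order _ x y fsc.
have := strongly_convex_first_order _ y x fsc.
rewrite -opprB enormN dotpBl !dotpNr; lra.
Qed.

Lemma smooth_descent L x y : smooth L gradf ->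
  f y <= f x + dotp (gradf x) (y - x) + L / 2 * enorm (y - x) ^+ 2.
Proof.
move=> [L0 lipschitz]; set v := y - x; set a := dotp (gradf x) v.
set c := L / 2 * enorm v ^+ 2.
pose chi := (fun t => f (x + t *: v)) - a \*: (@id R) - c \*: ((@id R) ^+ 2).
have chi' t : is_derive t (1 : R) chi (dotp (gradf (x + t *: v)) v - a - c * (2 * t)).
  have chi'E := is_deriveB (is_deriveB (is_derive_along x v t)
    (is_deriveZ a (is_derive_id t 1))) (is_deriveZ c (is_deriveX 2 (is_derive_id t 1))).
  by apply: is_derive_eq; rewrite /GRing.scale /= !mulr1 expr1.
have chi'_le0 t : t \in `]0, 1[%R -> derive1 chi t <= 0.
  rewrite in_itv /= => /andP [t0 _].
  rewrite derive1E (@derive_val _ _ _ _ _ _ _ (chi' t)) -dotpBl.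
  have := dotp_le_enorm (gradf (x + t *: v) - gradf x) v.
  have := lipschitz (x + t *: v) x.
  have -> : x + t *: v - x = t *: v by rewrite addrC addKr.
  rewrite enormZ ?(ltW t0) //.
  have := enorm_ge0 v; have := enorm_ge0 (gradf (x + t *: v) - gradf x).
  rewrite /c; nra.
have chi_cont : {within `[0, 1], continuous chi}.
  apply: continuous_subspaceT => s.
  by apply/differentiable_continuous/derivable1_diffP; case: (chi' s).
have chi_derivable t : derivable chi t 1 by case: (chi' t).
have : chi 1 <= chi 0.
  apply: (ler0_derive1_le_cc (fun t _ => chi_derivable t) chi'_le0 chi_cont);
    by rewrite ?in_itv /= ?lexx ?ler01.
change (f (x + 1 *: v) - a * 1 - c * (1 * 1) <=
  f (x + 0 *: v) - a * 0 - c * (0 * 0) -> f y <= f x + a + c).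
rewrite scale0r scale1r addr0 /v [x + (y - x)]addrC subrK; lra.
Qed.

Lemma strongly_convex_cocoercive mu L x y :
  strongly_convex mu f -> smooth L gradf ->
  mu * L * enorm (x - y) ^+ 2 + enorm (gradf x - gradf y) ^+ 2 <=
    (L + mu) * dotp (gradf x - gradf y) (x - y).
Proof.
move=> fsc fsm.
pose h z := f z - mu / 2 * enorm z ^+ 2.
pose gh z := gradf z - mu *: z.
have convex u v : h u + dotp (gh u) (v - u) <= h v.
  have := strongly_convex_first_order _ u v fsc.
  rewrite /h /gh dotpBl dotpZl !dotpBr enorm_sqB (dotpC v u) !enorm_sq; lra.
have descent u v : h v <= h u + dotp (gh u) (v - u) + (L - mu) / 2 * enorm (v - u) ^+ 2.
  have := smooth_descent _ u v fsm.
  rewrite /h /gh dotpBl dotpZl !dotpBr enorm_sqB (dotpC v u) !enorm_sq; lra.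
have := cocoercive_of_convex_descent _ _ _ convex descent x y.
have -> : gh x - gh y = (gradf x - gradf y) - mu *: (x - y).
  by rewrite /gh scalerBr !opprB !addrA [RHS]addrAC [LHS]addrAC [gradf x - _ - gradf y]addrAC.
rewrite enorm_sqBZ !dotpBl dotpZl -enorm_sq; nra.
Qed.

Lemma strongly_convex_smooth_le mu L x y :
  strongly_convex mu f -> smooth L gradf -> x != y -> mu <= L.
Proof.
move=> fsc [_ lipschitz] xNy.
have D0 : 0 < enorm (x - y) by rewrite lt_def enorm_eq0 subr_eq0 xNy enorm_ge0.
rewrite -(ler_pM2r (exprn_gt0 2 D0)).
apply: le_trans (strongly_convex_monotone _ x y fsc) _.
apply: le_trans (dotp_le_enorm _ _) _; rewrite expr2 mulrA.
by rewrite ler_wpM2r ?enorm_ge0.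
Qed.

End Gradient.

Section ScalarBounds.
Context {R : realType}.

Lemma quadratic_le_of_discriminant (a c B x : R) :
  0 <= c -> 0 <= B -> a ^+ 2 <= 4 * c * B -> a * x - c * x ^+ 2 <= B.
Proof.
move=> c0 B0 disc; have [c_eq0|c_neq0] := eqVneq c 0.
  have a0 : a = 0.
    apply/eqP; rewrite -sqrf_eq0 eq_le sqr_ge0 andbT.
    by rewrite c_eq0 mulr0 mul0r in disc.
  by rewrite a0 c_eq0 !mul0r subr0.
have c_gt0 : 0 < c by rewrite lt_def c_neq0.
rewrite -(ler_pM2l (_ : 0 < 4 * c)) ?mulr_gt0 //.
have := sqr_ge0 (a - 2 * c * x); lra.
Qed.

Lemma sqr_convex_comb (a b u : R) : 0 <= u <= 1 ->
  ((1 - u) * a + u * b) ^+ 2 <= (1 - u) * a ^+ 2 + u * b ^+ 2.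
Proof.
case/andP=> u0 u1; rewrite -subr_ge0.
have -> : (1 - u) * a ^+ 2 + u * b ^+ 2 - ((1 - u) * a + u * b) ^+ 2 =
  u * (1 - u) * (a - b) ^+ 2 by ring.
by rewrite mulr_ge0 ?sqr_ge0 // mulr_ge0 // subr_ge0.
Qed.

(* The left side is convex and the right side affine in [u = eta * L], so it
   suffices to check [u = 0] and [u = 1]. *)
Lemma sgd_discriminant (mu L eta k : R) :
  0 < mu <= L -> 0 <= eta -> eta * L <= 1 -> L <= k ->
  (L + mu - 2 * eta * mu * L) ^+ 2 <= 4 * (1 - eta * (L + mu) / 2) * (2 * k * L).
Proof.
case/andP=> mu0 muL eta0 etaL Lk; set u := eta * L.
have L0 : 0 < L := lt_le_trans mu0 muL.
have u01 : 0 <= u <= 1 by rewrite etaL mulr_ge0 // ltW.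
have -> : L + mu - 2 * eta * mu * L = (1 - u) * (L + mu) + u * (L - mu).
  by rewrite /u; ring.
have -> : 4 * (1 - eta * (L + mu) / 2) * (2 * k * L) =
    (1 - u) * (8 * k * L) + u * (4 * k * (L - mu)) by rewrite /u; field.
apply: le_trans (sqr_convex_comb (L + mu) (L - mu) _ u01) _.
case/andP: u01 => u0 u1.
apply: lerD; apply: ler_wpM2l; rewrite ?subr_ge0 //; nra.
Qed.

Lemma sgd_step_near_bound (mu L eta r m s D G p : R) :
  0 < mu <= L -> 0 < eta -> eta * L <= 1 -> 0 <= r -> 0 <= s -> L <= m * mu ->
  mu * L * D ^+ 2 + G ^+ 2 <= (L + mu) * p ->
  2 * p - eta * G ^+ 2 < 2 * r * G + eta * s ->
  D ^+ 2 - 2 * eta * p + eta ^+ 2 * G ^+ 2 + eta ^+ 2 * s <= m * (2 * r ^+ 2 + s / L ^+ 2).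
Proof.
move=> mu_range eta0 etaL r0 s0 Lm cocoercive near.
have /andP[mu0 muL] := mu_range.
have L0 : 0 < L := lt_le_trans mu0 muL.
set A := L + mu - 2 * eta * mu * L; set c := 1 - eta * (L + mu) / 2.
have A0 : 0 <= A by rewrite /A; nra.
have c0 : 0 <= c by rewrite /c; nra.
(* Substituting the co-coercivity bound and then the bound on [p] leaves a
   concave quadratic in [G] with leading coefficient [- c]. *)
have step : mu * L * (D ^+ 2 - 2 * eta * p + eta ^+ 2 * G ^+ 2 + eta ^+ 2 * s) <=
    A * r * G - c * G ^+ 2 + eta * (L + mu) * s / 2.
  have := ler_wpM2l A0 (ltW near); rewrite /A /c; lra.
have quad : A * r * G - c * G ^+ 2 <= 2 * (m * mu) * L * r ^+ 2.
  apply: quadratic_le_of_discriminant => //.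
    by rewrite !mulr_ge0 ?sqr_ge0 //; nra.
  have := sgd_discriminant _ _ _ _ mu_range (ltW eta0) etaL Lm.
  move=> /(ler_wpM2r (sqr_ge0 r)); rewrite /A /c exprMn; lra.
have noise : eta * (L + mu) * s / 2 <= m * mu * s / L.
  have : eta * (L + mu) / 2 <= 1 by nra.
  have : 1 <= m * mu / L by rewrite ler_pdivlMr // mul1r.
  move=> /(ler_wpM2r s0) + /(ler_wpM2r s0); lra.
rewrite -(ler_pM2l (mulr_gt0 mu0 L0)).
have -> : mu * L * (m * (2 * r ^+ 2 + s / L ^+ 2)) =
    2 * (m * mu) * L * r ^+ 2 + m * mu * s / L by field; rewrite gt_eqF.
lra.
Qed.

End ScalarBounds.

Definition sgd_radius {R : realType} (mu L r s : R) : R :=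
  r + Num.sqrt (Num.max 3 (L / mu)) * Num.sqrt (2 * r ^+ 2 + s / L ^+ 2).

Section GradientStep.
Context {R : realType} {d : nat}.
Implicit Types (x xs g z : 'rV[R]_d).

Lemma enorm_step_le_far {x xs g} {eta r s : R} : 0 < eta -> enorm xs <= r ->
  2 * r * enorm g + eta * s <= 2 * dotp g (x - xs) - eta * enorm g ^+ 2 ->
  enorm (x - eta *: g) ^+ 2 + eta ^+ 2 * s <= enorm x ^+ 2.
Proof.
move=> eta0 xs_r far; rewrite enorm_sqBZ.
have : - (enorm g * r) <= dotp g xs.
  have := dotp_le_enorm g (- xs); rewrite dotpNr enormN.
  have := ler_wpM2l (enorm_ge0 g) xs_r; lra.
move: far; rewrite dotpBr (dotpC x g) => far /(ler_wpM2l (ltW eta0)) => g_xs.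
have := ler_wpM2l (ltW eta0) far; nra.
Qed.

Lemma enorm_sqD_le {xs z} {r S e : R} : enorm xs <= r -> 0 <= S -> 0 <= e ->
  enorm z ^+ 2 + e <= S ^+ 2 -> enorm (xs + z) ^+ 2 + e <= (r + S) ^+ 2.
Proof.
move=> xs_r S0 e0 z_S.
have z_le_S : enorm z <= S.
  by rewrite -(ler_pXn2r (_ : 0 < 2)%N) ?nnegrE ?enorm_ge0 //; lra.
have : enorm (xs + z) ^+ 2 <= (enorm xs + enorm z) ^+ 2.
  by rewrite ler_pXn2r ?nnegrE ?addr_ge0 ?enorm_ge0 // enorm_triangle.
have := ler_wpM2r (enorm_ge0 z) xs_r; have := ler_wpM2l (enorm_ge0 xs) z_le_S.
have := ler_wpM2r S0 xs_r; have := enorm_ge0 xs; nra.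
Qed.
End GradientStep.

Lemma gradient_step_le {R : realType} {d : nat} {f : 'rV[R]_d -> R}
    {gradf : 'rV[R]_d -> 'rV[R]_d} {mu L r eta s : R} {xs x : 'rV[R]_d} :
  is_gradient f gradf -> strongly_convex mu f -> smooth L gradf ->
  is_minimizer f xs -> enorm xs <= r -> 0 < eta <= 1 / L -> 0 <= s ->
  enorm x <= sgd_radius mu L r s ->
  enorm (x - eta *: gradf x) ^+ 2 + eta ^+ 2 * s <= sgd_radius mu L r s ^+ 2.
Proof.
move=> fgrad fsc fsm xs_min xs_r /andP[eta0 etaL] s0 x_R.
have [mu0 _] := fsc; have [L0 _] := fsm.
have etaL1 : eta * L <= 1 by rewrite -ler_pdivlMr.
rewrite /sgd_radius; set m := Num.max 3 (L / mu); set S := Num.sqrt m * _.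
have m3 : 3 <= m by rewrite le_max lexx.
have Lm : L <= m * mu by rewrite -ler_pdivrMr // /m le_max lexx orbT.
have q0 : 0 <= 2 * r ^+ 2 + s / L ^+ 2.
  by have := sqr_ge0 r; have := divr_ge0 s0 (sqr_ge0 L); lra.
have S0 : 0 <= S by rewrite mulr_ge0 ?sqrtr_ge0.
have S_sq : S ^+ 2 = m * (2 * r ^+ 2 + s / L ^+ 2).
  by rewrite exprMn !sqr_sqrtr // (le_trans _ m3).
set g := gradf x.
have [far|near] := leP (2 * r * enorm g + eta * s) (2 * dotp g (x - xs) - eta * enorm g ^+ 2).
  apply: le_trans (enorm_step_le_far eta0 xs_r far) _.
  by rewrite ler_pXn2r ?nnegrE ?enorm_ge0 ?(le_trans (enorm_ge0 x)).
have -> : x - eta *: g = xs + ((x - xs) - eta *: g) by rewrite addrA [xs + _]addrC subrK.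
apply: (enorm_sqD_le xs_r S0); first by rewrite mulr_ge0 ?sqr_ge0.
rewrite S_sq enorm_sqBZ (dotpC _ g).
have g_xs := gradient_eq0_at_minimizer fgrad xs xs_min.
have [x_xs|xNxs] := eqVneq x xs.
  rewrite /g x_xs g_xs subrr dotp0l enorm0 expr0n /= !mulr0 subr0 !add0r.
  have : eta ^+ 2 * s <= s / L ^+ 2.
    rewrite ler_pdivlMr ?exprn_gt0 // mulrAC -exprMn ler_piMl //.
    by rewrite expr_le1 // mulr_ge0 // ltW.
  have := ler_wpM2r q0 (le_trans (ler1n _ 3) m3); have := sqr_ge0 r; lra.
apply: (sgd_step_near_bound _ _ _ _ _ _ _ _ _ _ eta0 etaL1 _ s0 Lm _ near).
- by rewrite mu0 (strongly_convex_smooth_le fgrad _ _ _ _ fsc fsm xNxs).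
- exact: le_trans (enorm_ge0 _) xs_r.
- by have := strongly_convex_cocoercive fgrad _ _ x xs fsc fsm; rewrite g_xs subr0.
Qed.

Section CenteredSecondMoment.
Context {R : realType} {d : nat} {d0 : measure_display} {Omega : measurableType d0}.
Variable P : probability Omega R.

Lemma expectation_dotp_centered (c : 'rV[R]_d) (X : Omega -> 'rV[R]_d) :
  (forall i, (fun w => X w ord0 i) \in Lfun P 1 /\ ('E_P[fun w => X w ord0 i] = 0)%E) ->
  (fun w => dotp (X w) c) \in Lfun P 1 /\ ('E_P[fun w => dotp (X w) c] = 0)%E.
Proof.
move=> centered.
have -> : (fun w => dotp (X w) c) =
    \sum_(i <- index_enum 'I_d) (fun w => X w ord0 i * c ord0 i).
  by rewrite fct_sumE.
have term i : (fun w => X w ord0 i * c ord0 i) \in Lfun P 1 /\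
    ('E_P[fun w => (X w ord0 i * c ord0 i)%R] = 0)%E.
  have [Xi_L Xi_E] := centered i.
  split; first exact: (Lfun_scale (c ord0 i) (lexx 1) Xi_L).
  by rewrite (expectationZl (c ord0 i) Xi_L) Xi_E mule0.
split; first by apply: rpred_sum => i _; case: (term i).
rewrite -(big_map (fun i w => X w ord0 i * c ord0 i) xpredT idfun) expectation_sum.
  by rewrite big_map big1 // => i _; case: (term i).
by move=> _ /mapP[i _ ->]; case: (term i).
Qed.

Lemma expectation_enorm_sqDZ_centered (c : 'rV[R]_d) (a : R) (X : Omega -> 'rV[R]_d) :
  (forall i, (fun w => X w ord0 i) \in Lfun P 1 /\ ('E_P[fun w => X w ord0 i] = 0)%E) ->
  (fun w => enorm (X w) ^+ 2) \in Lfun P 1 ->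
  ('E_P[fun w => (enorm (c + a *: X w) ^+ 2)%R] =
    (enorm c ^+ 2)%:E + (a ^+ 2)%:E * 'E_P[fun w => (enorm (X w) ^+ 2)%R])%E.
Proof.
move=> centered X2_L; have [dot_L dot_E] := expectation_dotp_centered c X centered.
have -> : (fun w => enorm (c + a *: X w) ^+ 2) = cst (enorm c ^+ 2)
    \+ (2 * a) \o* (fun w => dotp (X w) c) \+ (a ^+ 2) \o* (fun w => enorm (X w) ^+ 2).
  by apply/funext => w /=; rewrite enorm_sqD dotpZr enorm_sqZ dotpC; ring.
have L1 := Lfun_scale _ (lexx 1) dot_L; have L2 := Lfun_scale (a ^+ 2) (lexx 1) X2_L.
rewrite expectationD ?rpredD ?Lfun_cst //.
rewrite expectationD ?Lfun_cst // expectation_cst !expectationZl // dot_E.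
by rewrite mule0 adde0.
Qed.

Lemma Lfun1_of_expectation_le (Y : Omega -> R) (s : R) :
  measurable_fun setT Y -> (forall w, 0 <= Y w) -> ('E_P[Y] <= s%:E)%E ->
  Y \in Lfun P 1.
Proof.
move=> mY Y0 EY; apply/Lfun1_integrable/integrableP; split.
  exact/measurable_EFinP.
apply: le_lt_trans (ltry s); rewrite unlock in EY; apply: le_trans EY.
by under eq_integral => w _ do rewrite gee0_abs ?lee_fin //.
Qed.

Lemma expectation_sgd_step (G : Omega -> 'rV[R]_d) (gx x : 'rV[R]_d) (eta s : R) :
  (forall i, P.-integrable setT (fun w => (G w ord0 i)%:E) /\
      ('E_P[fun w => (G w ord0 i)%R] = (gx ord0 i)%:E)%E) ->
  ('E_P[fun w => (enorm (G w - gx) ^+ 2)%R] <= s%:E)%E ->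
  ('E_P[fun w => (enorm (x - eta *: G w) ^+ 2)%R] <=
    (enorm (x - eta *: gx) ^+ 2 + eta ^+ 2 * s)%:E)%E.
Proof.
move=> unbiased variance.
have centered i : (fun w => (G w - gx) ord0 i) \in Lfun P 1 /\
    ('E_P[fun w => ((G w - gx) ord0 i)%R] = 0)%E.
  have [Gi_int Gi_E] := unbiased i; have Gi_L := (Lfun1_integrable _ _).2 Gi_int.
  have -> : (fun w => (G w - gx) ord0 i) = (fun w => G w ord0 i) \- cst (gx ord0 i).
    by apply/funext => w; rewrite !mxE.
  by rewrite rpredB ?Lfun_cst // expectationB ?Lfun_cst // Gi_E expectation_cst subee.
have X2_L : (fun w => enorm (G w - gx) ^+ 2) \in Lfun P 1.
  apply: (Lfun1_of_expectation_le _ _ _ _ variance) => [|w]; last exact: sqr_ge0.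
  have mXi i : measurable_fun setT (fun w => (G w - gx) ord0 i).
    exact/measurable_EFinP/(measurable_int P)/Lfun1_integrable/(centered i).1.
  rewrite (_ : (fun w => _) = fun w => \sum_(i < d) (G w - gx) ord0 i * (G w - gx) ord0 i).
    by apply: measurable_sum => i; apply: measurable_funM.
  by apply/funext => w; rewrite enorm_sq.
have -> : (fun w => enorm (x - eta *: G w) ^+ 2) =
    (fun w => enorm ((x - eta *: gx) + (- eta) *: (G w - gx)) ^+ 2).
  by apply/funext => w; rewrite scaleNr scalerBr opprB addrA subrK.
rewrite expectation_enorm_sqDZ_centered // EFinD sqrrN EFinM.
apply: leeD2l; rewrite EFinM.
have eta2 : (0 <= (eta ^+ 2)%:E)%E by rewrite lee_fin sqr_ge0.
exact: (lee_wpmul2l eta2 variance).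
Qed.
End CenteredSecondMoment.

Theorem theorem2 (R : realType) (d : nat) (f : 'rV[R]_d -> R)
  (gradf : 'rV[R]_d -> 'rV[R]_d) (mu L r sigma eta : R) (xs : 'rV[R]_d)
  (d0 : measure_display) (Omega : measurableType d0) (P : probability Omega R)
  (g : nat -> 'rV[R]_d -> Omega -> 'rV[R]_d) :
  is_gradient f gradf ->
  strongly_convex mu f ->
  smooth L gradf ->
  is_minimizer f xs ->
  enorm xs <= r ->
  0 < eta <= 1 / L ->
  (forall k x (i : 'I_d), P.-integrable setT (fun w => (g k x w ord0 i)%:E) /\
      ('E_P[fun w => (g k x w ord0 i)%R] = (gradf x ord0 i)%:E)%E) ->
  (forall k x, ('E_P[fun w => (enorm (g k x w - gradf x) ^+ 2)%R] <= (sigma ^+ 2)%:E)%E) ->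
  let kappa := L / mu in
  let Rad := r + Num.sqrt (Num.max 3 kappa) * Num.sqrt (2 * r ^+ 2 + sigma ^+ 2 / L ^+ 2) in
  forall (k : nat) (x : 'rV[R]_d), enorm x <= Rad ->
    ('E_P[fun w => (enorm (x - eta *: g k x w) ^+ 2)%R] <= (Rad ^+ 2)%:E)%E.
Proof.
move=> fgrad fsc fsm xs_min xs_r eta_range unbiased variance kappa Rad k x x_R.
apply: le_trans (expectation_sgd_step P (g k x) (gradf x) x eta _ (unbiased k x) (variance k x)) _.
rewrite lee_fin.
exact: (gradient_step_le fgrad fsc fsm xs_min xs_r eta_range (sqr_ge0 sigma) x_R).
Qed.
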